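(* Let $n\ge 1$ and $k\ge 3$ be integers. The number of vertices of the $k$-Pell graph $\Pi_{n,k}$ of degree $\Delta(\Pi_{n,k})-1=2n-1$ equals $$n\,(k-2)^{n-1}+\sum_{\ell=1}^{n}(n-\ell+1)\,(k-2)^{n-\ell}.$$
   Context: For an integer $k\ge 2$, a $k$-Pell string is a finite word over the alphabet $\{0,1,\ldots,k-1,kk\}$, i.e. a word over $\{0,1,\ldots,k\}$ in which every maximal run of the letter $k$ has even length. For $n\ge 0$, the $k$-Pell graph $\Pi_{n,k}$ has as vertices all $k$-Pell strings of length $n$, and two vertices are adjacent if one is obtained from the other either by replacing a single letter $i$ by $i+1$ (or vice versa) for some $i\in\{0,1,\ldots,k-2\}$, or by replacing one factor $(k-1)(k-1)$ by $kk$ (or vice versa), in such a way that the resulting string is again a $k$-Pell string. $\Delta(G)$ denotes the maximum degree of $G$. *)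

From mathcomp Require Import all_boot.
Set Implicit Arguments. Unset Strict Implicit. Unset Printing Implicit Defensive.

(* A word over {0,...,k} (letters as nats) is a k-Pell string iff it is a word
   over the alphabet {0,1,...,k-1, kk}, i.e. every maximal run of k has even length. *)
Fixpoint is_pell (k : nat) (s : seq nat) : bool :=
  match s with
  | [::] => true
  | x :: s' =>
      if x == k then
        match s' with
        | y :: s'' => (y == k) && is_pell k s''
        | [::] => false
        end
      else is_pell k s'
  end.

Definition word (n k : nat) := n.-tuple 'I_k.+1.

Definition pellw n k (u : word n k) : bool := is_pell k [seq val x | x <- u].

Definition step1 n k (u v : word n k) : bool :=
  [exists i : 'I_n,
     [forall j : 'I_n, (j != i) ==> (tnth u j == tnth v j)] &&
     [&& ((tnth u i).+1 == tnth v i) || ((tnth v i).+1 == tnth u i),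
         val (tnth u i) < k & val (tnth v i) < k]].

Definition step2 n k (u v : word n k) : bool :=
  [exists i : 'I_n, exists j : 'I_n,
     [&& val j == (val i).+1,
         [forall l : 'I_n, ((l != i) && (l != j)) ==> (tnth u l == tnth v l)],
         val (tnth u i) == k.-1, val (tnth u j) == k.-1,
         val (tnth v i) == k & val (tnth v j) == k]].

Definition pell_adj n k (u v : word n k) : bool :=
  [&& pellw u, pellw v & [|| step1 u v, step2 u v | step2 v u]].

Definition pell_vertices n k : {set word n k} := [set v | pellw v].

Definition pell_deg n k (v : word n k) : nat := #|[set w | pell_adj v w]|.

Definition pell_maxdeg n k : nat := \max_(v in pell_vertices n k) pell_deg v.

From mathcomp Require Import all_boot zify.
Set Implicit Arguments. Unset Strict Implicit. Unset Printing Implicit Defensive.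

(* Count two potential moves per letter of a k-Pell string, a block kk counting as two
   letters.  A letter in {1,...,k-2} realises both, so the degree of a vertex is 2n minus
   its deficiency: one for each letter 0, one for each maximal run of letters k-1 (all
   but its last letter can merge with their successor into kk), three for each block kk.
   Hence Delta = 2n, attained by 11...1 since k >= 3, and the vertices of degree 2n-1 are
   those of deficiency one: a single 0, or a single run of l letters k-1, all other
   letters lying in {1,...,k-2}; there are n(k-2)^(n-1), resp. (n-l+1)(k-2)^(n-l), of
   them.  The count is carried out through linear recurrences on the first letter. *)

Lemma exists_ordS n (P : pred 'I_n.+1) :
  [exists i, P i] = P ord0 || [exists i : 'I_n, P (lift ord0 i)].
Proof.
apply/existsP/orP => [[i Pi]|[P0|/existsP[i Pi]]]; last by exists (lift ord0 i).
- case: (unliftP ord0 i) Pi => [j ->|->] Pi; last by left.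
  by right; apply/existsP; exists j.
- by exists ord0.
Qed.

Lemma forall_ordS n (P : pred 'I_n.+1) :
  [forall i, P i] = P ord0 && [forall i : 'I_n, P (lift ord0 i)].
Proof.
apply/forallP/andP => [H|[P0 /forallP H] i]; first by split => //; apply/forallP.
by case: (unliftP ord0 i) => [j ->|->].
Qed.

Lemma val_lift0 n (i : 'I_n) : val (lift (@ord0 n) i) = (val i).+1.
Proof. by []. Qed.

Lemma size_ind (T : Type) (P : seq T -> Prop) :
  (forall s, (forall t, size t < size s -> P t) -> P s) -> forall s, P s.
Proof.
move=> IH s; elim: (size s).+1 {-2}s (ltnSn (size s)) => [|m IHm] t // lt_t.
by apply: IH => u lt_u; apply: IHm; apply: leq_trans lt_u lt_t.
Qed.

Lemma mem_map_cons (T : eqType) (a b : T) t L :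
  (b :: t \in [seq a :: s | s <- L]) = (b == a) && (t \in L).
Proof.
by apply/mapP/andP => [[s sL [-> ->]]|[/eqP -> tL]]; [rewrite eqxx | exists t].
Qed.

Lemma mem_map_cons_tail (T : eqType) (s : seq T) b t L :
  (b :: t \in [seq x :: s | x <- L]) = (b \in L) && (t == s).
Proof.
by apply/mapP/andP => [[x xL [-> ->]]|[bL /eqP ->]]; [rewrite eqxx | exists b].
Qed.

Lemma mem_map_cons2 (T : eqType) (a b c : T) t L :
  (b :: c :: t \in [seq a :: a :: s | s <- L]) = [&& b == a, c == a & t \in L].
Proof.
apply/mapP/and3P => [[s sL [-> -> ->]]|[/eqP -> /eqP -> tL]]; last by exists t.
by rewrite !eqxx.
Qed.

Lemma count_addn (T : Type) (f g h : pred T) s :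
  (forall x, f x = g x + h x :> nat) -> count f s = count g s + count h s.
Proof. by move=> fgh; elim: s => [|x s IH] //=; rewrite IH fgh; lia. Qed.

Lemma sum_split_ends (F : nat -> nat) k : 1 < k ->
  \sum_(0 <= x < k.+1) F x = F 0 + \sum_(1 <= x < k.-1) F x + F k.-1 + F k.
Proof.
case: k => [|[|k]] // _; rewrite big_ltn // big_nat_recr // big_nat_recr //=.
by rewrite !addnA.
Qed.

Definition weighted_powsum c n := \sum_(1 <= l < n.+1) (n - l + 1) * c ^ (n - l).

Lemma weighted_powsumS c n : weighted_powsum c n.+1 = n.+1 * c ^ n + weighted_powsum c n.
Proof. by rewrite /weighted_powsum big_ltn // big_add1 /= subSS subn0 addn1; congr (_ + _). Qed.

Lemma weighted_powsum_geom c n :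
  c * weighted_powsum c n + \sum_(0 <= i < n) c ^ i = n * c ^ n + weighted_powsum c n.
Proof.
elim: n => [|n IH]; first by rewrite /weighted_powsum !big_geq // muln0.
rewrite weighted_powsumS big_nat_recr //; set S := \sum_(0 <= i < n) _ in IH *.
by rewrite /= expnS; nia.
Qed.

(** * Words as letter sequences *)

Section Letters.

Variables n k : nat.

Definition letters (u : word n k) : seq nat := [seq val x | x <- u].

Lemma letters_inj : injective letters.
Proof. by move=> u v /(inj_map val_inj) uv; apply: val_inj. Qed.

Lemma size_letters u : size (letters u) = n.
Proof. by rewrite size_map size_tuple. Qed.

Lemma letters_le u : all (fun x => x <= k) (letters u).
Proof. by apply/allP => y /mapP[z _ ->]; rewrite -ltnS ltn_ord. Qed.

Lemma eq_letters u v : [forall j, tnth u j == tnth v j] = (letters u == letters v).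
Proof.
apply/forallP/eqP => [uv|/letters_inj -> //].
by congr letters; apply: eq_from_tnth => j; apply/eqP.
Qed.

End Letters.

Lemma letters_cons n k (x : 'I_k.+1) (u : word n k) :
  letters [tuple of x :: u] = val x :: letters u.
Proof. by []. Qed.

Fixpoint enum_words n k : seq (seq nat) :=
  if n is m.+1 then [seq x :: s | x <- iota 0 k.+1, s <- enum_words m k] else [:: [::]].

Lemma enum_wordsS n k :
  enum_words n.+1 k = [seq x :: s | x <- iota 0 k.+1, s <- enum_words n k].
Proof. by []. Qed.

Lemma uniq_enum_words n k : uniq (enum_words n k).
Proof.
elim: n => [|n IH] //; rewrite enum_wordsS; apply: allpairs_uniq => //; first exact: iota_uniq.
by move=> [x s] [y t] _ _ /= [-> ->].
Qed.

Lemma mem_enum_words n k t :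
  (t \in enum_words n k) = (size t == n) && all (fun x => x <= k) t.
Proof.
elim: n t => [|n IH] [|x t] //; rewrite enum_wordsS.
  by apply/allpairsP => -[[y s] [_ _]].
apply/allpairsP/andP => [[[y s] [y_in s_in [-> ->]]]|[/eqP[sz] /andP[le_x le_t]]].
  by move: y_in s_in; rewrite mem_iota IH /= => y_le /andP[/eqP -> ->]; split; lia.
by exists (x, t); rewrite mem_iota IH sz eqxx; split=> //; lia.
Qed.

Lemma count_enum_wordsS n k (P : pred (seq nat)) :
  count P (enum_words n.+1 k) =
  \sum_(0 <= x < k.+1) count (fun s => P (x :: s)) (enum_words n k).
Proof.
rewrite enum_wordsS /index_iota subn0.
elim: (iota 0 k.+1) => [|x xs IH]; first by rewrite big_nil.
by rewrite big_cons /= count_cat IH count_map.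
Qed.

Lemma card_letters_in n k (L : seq (seq nat)) : uniq L ->
  (forall t, t \in L -> size t = n /\ all (fun x => x <= k) t) ->
  #|[set v : word n k | letters v \in L]| = size L.
Proof.
elim: L => [|t L IH] /= => [_ _|/andP[t_notin uniq_L] L_ok].
  by apply/eqP; rewrite cards_eq0; apply/eqP/setP => v; rewrite !inE.
have [size_t le_t] := L_ok t (mem_head _ _).
have size_t' : size (map (@inord k) t) == n by rewrite size_map size_t.
set u := Tuple size_t'.
have letters_u : letters u = t.
  rewrite /letters /= -map_comp; apply: map_id_in => y y_in /=; apply: inordK.
  by move/allP: le_t => /(_ y y_in).
rewrite (_ : [set v | letters v \in t :: L] = u |: [set v | letters v \in L]).
  rewrite cardsU1 inE letters_u t_notin IH // => s s_in; apply: L_ok.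
  by rewrite in_cons s_in orbT.
by apply/setP => v; rewrite !inE -letters_u (inj_eq (@letters_inj n k)).
Qed.

Lemma card_letters_count n k (P : pred (seq nat)) :
  #|[set v : word n k | P (letters v)]| = count P (enum_words n k).
Proof.
rewrite -size_filter -(@card_letters_in n k); first last.
- by move=> t; rewrite mem_filter mem_enum_words => /andP[_ /andP[/eqP]].
- by rewrite filter_uniq // uniq_enum_words.
congr #|pred_of_set _|; apply/setP => v /=.
by rewrite !inE mem_filter mem_enum_words size_letters letters_le eqxx !andbT.
Qed.

Definition letter_adj k a b := [&& (a.+1 == b) || (b.+1 == a), a < k & b < k].

Fixpoint seq_step1 k (s t : seq nat) : bool :=
  match s, t with
  | a :: s', b :: t' => ((a == b) && seq_step1 k s' t') || (letter_adj k a b && (s' == t'))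
  | _, _ => false
  end.

Definition raise_head k (s t : seq nat) : bool :=
  match s, t with
  | a :: s', b :: t' => [&& a == k.-1, b == k & s' == t']
  | _, _ => false
  end.

Fixpoint seq_step2 k (s t : seq nat) : bool :=
  match s, t with
  | a :: s', b :: t' =>
      ((a == b) && seq_step2 k s' t') || [&& a == k.-1, b == k & raise_head k s' t']
  | _, _ => false
  end.

Lemma step1E n k (u v : word n k) : step1 u v = seq_step1 k (letters u) (letters v).
Proof.
elim: n u v => [|n IH] u v.
  by rewrite (tuple0 u) (tuple0 v) /=; apply/negbTE/existsP => -[[]].
case: u / tupleP => a u; case: v / tupleP => b v.
rewrite !letters_cons /= -IH /step1 exists_ordS forall_ordS /= !tnth0.
rewrite (_ : [forall i, _] = (letters u == letters v)); last first.
  by rewrite -eq_letters; apply: eq_forallb => j; rewrite !tnthS.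
rewrite orbC; congr orb; last by rewrite /letter_adj andbC.
under eq_existsb => i do rewrite forall_ordS /= !tnth0 !tnthS.
apply/existsP/andP => [[i /and4P[/andP[ab off] ai bi ki]]|[ab /existsP[i /and4P[off ai bi ki]]]].
  split=> //; apply/existsP; exists i; rewrite ai bi ki !andbT.
  apply/forallP => j; apply/implyP => ji; move/forallP: off => /(_ j).
  by rewrite (inj_eq lift_inj) ji !tnthS.
exists i; rewrite ai bi ki !andbT; apply/andP; split=> //.
apply/forallP => j; rewrite (inj_eq lift_inj) !tnthS; apply: (forallP off j).
Qed.

(* The summand [i = ord0] of [step2] on words with heads [a] and [b], after [exists_ordS]. *)
Lemma step2_headE n k (u v : word n k) (a b : 'I_k.+1) :
  [exists j : 'I_n.+1, [&& val j == 1,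
      [forall l, ((l != ord0) && (l != j)) ==>
                 (tnth [tuple of a :: u] l == tnth [tuple of b :: v] l)],
      val a == k.-1, val (tnth [tuple of a :: u] j) == k.-1, val b == k
    & val (tnth [tuple of b :: v] j) == k]]
  = [&& val a == k.-1, val b == k & raise_head k (letters u) (letters v)].
Proof.
case: n u v => [|n] u v.
  rewrite (tuple0 u) (tuple0 v) /= !andbF.
  by apply/negbTE/existsP => -[[m lt_m] /andP[/= /eqP m1 _]]; move: lt_m; rewrite m1.
case: u / tupleP => c u; case: v / tupleP => d v.
rewrite !letters_cons /=.
apply/existsP/idP => [[j /and5P[/eqP j1 off ai uj /andP[bi vj]]]|
                     /and3P[ai bi /and3P[ci di /eqP uv]]].
  have {j1} ej : j = lift ord0 ord0 by apply: val_inj.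
  move: uj vj off; rewrite ej !tnthS !tnth0 ai bi => -> -> off /=.
  rewrite -eq_letters; apply/forallP => l.
  move/forallP: off => /(_ (lift ord0 (lift ord0 l))).
  by rewrite (eq_sym _ ord0) neq_lift /= !tnthS.
exists (lift ord0 ord0); rewrite !tnthS !tnth0 ai bi ci di !andbT /=.
apply/forallP => l; apply/implyP => /andP[l0 l1].
case: (unliftP ord0 l) l0 l1 => [l' ->|->] // _; rewrite (inj_eq lift_inj) !tnthS => l1.
case: (unliftP ord0 l') l1 => [l'' ->|->] //; rewrite !tnthS => _.
by move/letters_inj: uv => ->.
Qed.

Lemma step2E n k (u v : word n k) : step2 u v = seq_step2 k (letters u) (letters v).
Proof.
elim: n u v => [|n IH] u v.
  by rewrite (tuple0 u) (tuple0 v) /=; apply/negbTE/existsP => -[[]].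
case: u / tupleP => a u; case: v / tupleP => b v.
rewrite !letters_cons /= -IH -step2_headE /step2 exists_ordS orbC; congr orb.
apply/existsP/andP => [[i /existsP[j /and5P[ij off ui uj /andP[vi vj]]]]|
                       [ab /existsP[i /existsP[j /and5P[ij off ui uj /andP[vi vj]]]]]].
  case: (unliftP ord0 j) ij off uj vj => [j' ->|->] //.
  rewrite !val_lift0 eqSS !tnthS => ij off uj vj; rewrite !tnthS in ui vi; split.
    by move/forallP: off => /(_ ord0); rewrite !neq_lift /= !tnth0.
  apply/existsP; exists i; apply/existsP; exists j'; rewrite ij ui vi uj vj !andbT.
  apply/forallP => l; move/forallP: off => /(_ (lift ord0 l)).
  by rewrite !(inj_eq lift_inj) !tnthS.
exists i; apply/existsP; exists (lift ord0 j).
rewrite !val_lift0 eqSS ij !tnthS ui vi uj vj !andbT /=.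
apply/forallP => l; apply/implyP => /andP[l0 l1].
case: (unliftP ord0 l) l0 l1 => [l' ->|->]; last by rewrite !tnth0.
rewrite !(inj_eq lift_inj) !tnthS => l0 l1.
by move/forallP: off => /(_ l'); rewrite l0 l1.
Qed.

(** * Neighbours and deficiency *)

Definition letter_nbrs k a : seq nat :=
  (if 0 < a then [:: a.-1] else [::]) ++ (if a.+1 < k then [:: a.+1] else [::]).

Definition raise_nbrs k a (s : seq nat) : seq (seq nat) :=
  if s is c :: s' then (if (a == k.-1) && (c == k.-1) then [:: k :: k :: s'] else [::])
  else [::].

Fixpoint pell_nbrs k (s : seq nat) : seq (seq nat) :=
  match s with
  | [::] => [::]
  | a :: s' =>
    if a == k then
      if s' is _ :: s'' then
        (k.-1 :: k.-1 :: s'') :: [seq k :: k :: t | t <- pell_nbrs k s'']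
      else [::]
    else [seq b :: s' | b <- letter_nbrs k a] ++ [seq a :: t | t <- pell_nbrs k s'] ++
         raise_nbrs k a s'
  end.

(* A lone trailing k, impossible in a k-Pell string, gets the junk value 3. *)
Fixpoint deficiency k (s : seq nat) : nat :=
  match s with
  | [::] => 0
  | a :: s' =>
    if a == k then (if s' is _ :: s'' then 3 + deficiency k s'' else 3)
    else (a == 0) + ((a == k.-1) && (ohead s' != Some k.-1)) + deficiency k s'
  end.

Definition seq_adj k (s t : seq nat) :=
  is_pell k t && [|| seq_step1 k s t, seq_step2 k s t | seq_step2 k t s].

Lemma letter_adj_top k b : letter_adj k k b = false.
Proof. by rewrite /letter_adj ltnn andbF. Qed.

Lemma letter_adj_refl k a : letter_adj k a a = false.
Proof. by apply/negbTE; rewrite /letter_adj; lia. Qed.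

Lemma mem_letter_nbrs k a b : a < k -> (b \in letter_nbrs k a) = letter_adj k a b.
Proof.
move=> lt_ak; rewrite /letter_nbrs /letter_adj mem_cat lt_ak.
by case: ifP => ?; case: ifP => ?; rewrite ?in_cons ?in_nil ?orbF /=; lia.
Qed.

Lemma mem_raise_nbrs k a b s t :
  (b :: t \in raise_nbrs k a s) = [&& a == k.-1, b == k & raise_head k s t].
Proof.
case: s => [|c s] /=; first by rewrite !andbF.
case: t => [|d t] /=; case: ifP => ac;
  rewrite ?in_cons ?in_nil ?orbF ?eqseq_cons ?andbF //.
- by case/andP: ac => -> ->; rewrite [t == _]eq_sym andbA.
- by case: (a == k.-1) ac => //= ->; rewrite !andbF.
Qed.

Lemma pell_nbrs_le k s t : all (fun x => x <= k) s -> t \in pell_nbrs k s ->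
  size t = size s /\ all (fun x => x <= k) t.
Proof.
elim/size_ind: s t => -[|a s] IH t //= /andP[le_a le_s].
case: (eqVneq a k) => [_|ak].
  case: s IH le_s => [|c s] IH //= /andP[le_c le_s].
  rewrite in_cons => /orP[/eqP -> /=|/mapP[t' t'_in ->] /=].
    by rewrite le_s (_ : k.-1 <= k) //; lia.
  by have [-> ->] := IH s (leqnSn _) t' le_s t'_in; rewrite leqnn.
have lt_ak : a < k by lia.
rewrite !mem_cat => /orP[/mapP[b b_in ->]|/orP[/mapP[t' t'_in ->]|]] /=.
- by move: b_in; rewrite mem_letter_nbrs // => /and3P[_ _ /ltnW ->].
- by have [-> ->] := IH s (ltnSn _) t' le_s t'_in; rewrite le_a.
case: s {IH} le_s => [|c s] //= /andP[le_c le_s]; case: ifP => // _.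
by rewrite in_cons in_nil orbF => /eqP -> /=; rewrite leqnn le_s.
Qed.

Section Neighbours.

Variable k : nat.
Hypothesis k_gt0 : 0 < k.

Lemma mem_pell_nbrs s t : is_pell k s -> all (fun x => x <= k) s ->
  size t = size s -> all (fun x => x <= k) t -> seq_adj k s t = (t \in pell_nbrs k s).
Proof.
elim/size_ind: s t => -[|a s] IH t //=; first by case: t.
have top_neq : (k == k.-1) = false by lia.
case: (eqVneq a k) => [->|ak] /=.
  case: s IH => [|c s] IH //= /andP[/eqP -> pell_s] /andP[_ /andP[_ le_s]].
  case: t => [|b [|d t]] //= [size_t] /and3P[le_b le_d le_t].
  rewrite /seq_adj /= !letter_adj_top top_neq /=.
  case: (eqVneq b k) => [->|bk]; case: (eqVneq d k) => [->|dk];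
    rewrite /= ?eqxx ?top_neq ?andbF ?orbF /= ?in_cons ?eqseq_cons ?mem_map_cons2 ?eqxx
            ?top_neq /= ?andbF //.
  - by rewrite -IH //=; lia.
  - by rewrite (negbTE dk).
  - by rewrite (negbTE bk).
  rewrite (negbTE bk) /= orbF [t == _]eq_sym.
  by case: (eqVneq t s) => [->|]; rewrite ?pell_s ?andbF.
move=> pell_s /andP[le_a le_s]; have lt_ak : a < k by lia.
case: t => [|b t] //= [size_t] /andP[le_b le_t].
rewrite /seq_adj /= (negbTE ak) /= !andbF !orbF !mem_cat mem_map_cons_tail mem_map_cons
        mem_raise_nbrs mem_letter_nbrs //.
case: (eqVneq b a) => [->|ba] /=.
  by rewrite (negbTE ak) letter_adj_refl /= !andbF !orbF -IH.
rewrite orbF [t == _]eq_sym.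
apply/idP/idP => [/andP[_ //]|/orP[/andP[ab /eqP st]|/and3P[/eqP a1 /eqP bk raise_st]]].
  have lt_bk : b < k by case/and3P: ab.
  by rewrite (ltn_eqF lt_bk) -st pell_s ab eqxx.
rewrite bk a1 !eqxx /= raise_st orbT andbT.
case: s pell_s raise_st {IH size_t le_s} => [|c s] //.
case: t {le_t} => [|d t] //= + /and3P[/eqP c1 /eqP d1 /eqP st].
by rewrite c1 d1 (negbTE (_ : k.-1 != k)) ?eqxx -?st //; lia.
Qed.

Lemma uniq_pell_nbrs s : all (fun x => x <= k) s -> uniq (pell_nbrs k s).
Proof.
elim/size_ind: s => -[|a s] IH //= /andP[le_a le_s].
case: (eqVneq a k) => [_|ak] /=.
  case: s IH le_s => [|c s] IH //= /andP[_ le_s].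
  rewrite mem_map_cons2 (_ : (k.-1 == k) = false) /=; last by lia.
  by rewrite map_inj_uniq ?IH // => x y [].
have lt_ak : a < k by lia.
rewrite !cat_uniq !map_inj_uniq ?IH //=; try by move=> x y [].
have -> : uniq (letter_nbrs k a).
  by rewrite /letter_nbrs; case: ifP; case: ifP => //= _ _; rewrite in_cons in_nil orbF; lia.
have -> : uniq (raise_nbrs k a s) by case: s {IH le_s} => [|c s] //=; case: ifP.
rewrite /= andbT; apply/andP; split.
  apply/hasPn => -[|b t] /=.
    by rewrite mem_cat => /orP[/mapP[? ? //]|]; case: s {IH le_s} => [|c ?] //=; case: ifP.
  rewrite mem_cat mem_map_cons mem_map_cons_tail mem_letter_nbrs //.
  case/orP=> [/andP[/eqP -> _]|]; first by rewrite letter_adj_refl.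
  by rewrite mem_raise_nbrs => /and3P[_ /eqP -> _]; rewrite /letter_adj ltnn !andbF.
apply/hasPn => -[|b t] /=.
  by case: s {IH le_s} => [|c ?] //=; case: ifP => // _; rewrite in_cons in_nil.
by rewrite mem_raise_nbrs mem_map_cons => /and3P[_ /eqP -> _]; rewrite eq_sym (negbTE ak).
Qed.

Lemma size_pell_nbrs s : is_pell k s -> all (fun x => x <= k) s ->
  size (pell_nbrs k s) + deficiency k s = 2 * size s.
Proof.
elim/size_ind: s => -[|a s] IH //=.
case: (eqVneq a k) => [->|ak] /=.
  case: s IH => [|c s] IH //= /andP[_ pell_s] /andP[_ /andP[_ le_s]].
  by rewrite size_map; have := IH s _ pell_s le_s; rewrite /=; lia.
move=> pell_s /andP[le_a le_s]; have lt_ak : a < k by lia.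
rewrite !size_cat !size_map /letter_nbrs size_cat; have := IH s (ltnSn _) pell_s le_s.
move: (size (pell_nbrs k s)) (deficiency k s) => N D.
case: s {IH pell_s le_s} => [|c s] /=;
case a0: (a == 0); case a1: (a == k.-1); try case c1: (c == k.-1);
  rewrite /= ?(inj_eq (@Some_inj _)) ?a0 ?a1 ?c1 /=; repeat (case: ifP => ? /=); lia.
Qed.

End Neighbours.

Lemma is_pell_cons k x s : x != k -> is_pell k (x :: s) = is_pell k s.
Proof. by move=> /negbTE /= ->. Qed.

Lemma deficiency_cons_mid k x s : 0 < x < k.-1 -> deficiency k (x :: s) = deficiency k s.
Proof.
move=> x_mid; have [xk x0 x1] : [/\ x == k = false, x == 0 = false & x == k.-1 = false].
  by split; apply/negbTE; lia.
by rewrite /= xk x0 x1.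
Qed.

Section TopLetters.

Variable k : nat.
Hypothesis k_gt1 : 1 < k.

Lemma deficiency_cons0 s : deficiency k (0 :: s) = (deficiency k s).+1.
Proof.
have [k0 k1] : 0 == k = false /\ 0 == k.-1 = false by split; apply/negbTE; lia.
by rewrite /= k0 k1.
Qed.

Lemma deficiency_cons_top s :
  deficiency k (k.-1 :: s) = (ohead s != Some k.-1) + deficiency k s.
Proof.
have [k1k k10] : k.-1 == k = false /\ k.-1 == 0 = false by split; apply/negbTE; lia.
by rewrite /= k1k k10 eqxx.
Qed.

Lemma deficiency_top_gt0 s : ohead s = Some k.-1 -> 0 < deficiency k s.
Proof.
elim: s => [|x s IH] //= [->]; rewrite -/(deficiency k (k.-1 :: s)) deficiency_cons_top.
by case: (ohead s =P Some k.-1) => [/IH|]; rewrite ?addn_gt0 ?orbT.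
Qed.

End TopLetters.

Lemma deficiency_kk k s : 3 <= deficiency k (k :: s).
Proof. by rewrite /= eqxx; case: s => [|c s] //; rewrite leq_addr. Qed.

Lemma pell_nseq_mid k x m :
  0 < x < k.-1 -> is_pell k (nseq m x) /\ deficiency k (nseq m x) = 0.
Proof.
move=> x_mid; elim: m => [|m [pell_m deficiency_m]] //.
by rewrite [nseq _ _]/= is_pell_cons ?deficiency_cons_mid //; lia.
Qed.

(** * Degrees *)

Definition deficient k d : pred (seq nat) := fun s => is_pell k s && (deficiency k s == d).

Section Degree.

Variables n k : nat.

Lemma pell_deg_deficiency (v : word n k) : 0 < k -> pellw v ->
  pell_deg v + deficiency k (letters v) = 2 * n.
Proof.
move=> k_gt0 pell_v; rewrite /pell_deg.
have -> : [set w | pell_adj v w] = [set w : word n k | letters w \in pell_nbrs k (letters v)].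
  apply/setP => w; rewrite !inE /pell_adj pell_v /= !step1E !step2E.
  by rewrite -mem_pell_nbrs ?size_letters ?letters_le.
rewrite card_letters_in ?uniq_pell_nbrs ?letters_le //.
  by rewrite size_pell_nbrs ?letters_le // size_letters.
by move=> t /(pell_nbrs_le (letters_le v)); rewrite size_letters.
Qed.

Lemma pell_maxdegE : 3 <= k -> pell_maxdeg n k = 2 * n.
Proof.
move=> k_ge3; have k_gt0 : 0 < k by lia.
apply/eqP; rewrite eqn_leq; apply/andP; split.
  apply/bigmax_leqP => v; rewrite inE => pell_v.
  by have := pell_deg_deficiency k_gt0 pell_v; lia.
have one_mid : 0 < 1 < k.-1 by lia.
have [pell_ones deficiency_ones] := pell_nseq_mid n one_mid.
pose ones := nseq_tuple n (inord 1 : 'I_k.+1).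
have letters_ones : letters ones = nseq n 1 by rewrite /letters /= map_nseq inordK //; lia.
have pell_ones' : pellw ones by rewrite /pellw -/(letters ones) letters_ones.
have := pell_deg_deficiency k_gt0 pell_ones'.
rewrite letters_ones deficiency_ones addn0 => <-.
by apply: leq_bigmax_cond; rewrite inE.
Qed.

Lemma card_pell_deg_pred : 0 < n -> 0 < k ->
  #|[set v in pell_vertices n k | pell_deg v == (2 * n).-1]| =
  count (deficient k 1) (enum_words n k).
Proof.
move=> n_gt0 k_gt0; rewrite -card_letters_count; congr #|pred_of_set _|.
apply/setP => v; rewrite !inE /deficient -[is_pell k _]/(pellw v).
case pell_v: (pellw v) => //=; have := pell_deg_deficiency k_gt0 pell_v.
by move=> deg; apply/eqP/eqP; lia.
Qed.

End Degree.

(** * Counting by the first letter *)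

Section DeficiencyCounts.

Variable k : nat.
Hypothesis k_ge3 : 3 <= k.

Let k_gt1 : 1 < k. Proof. by apply: leq_trans k_ge3. Qed.

Definition top_deficient1 : pred (seq nat) :=
  fun s => (ohead s == Some k.-1) && deficient k 1 s.

Lemma top_deficient1_cons x s :
  top_deficient1 (x :: s) = (x == k.-1) && deficient k 1 (x :: s).
Proof. by rewrite /top_deficient1 /= (inj_eq (@Some_inj _)). Qed.

Lemma count_enum_words_first_letter (P P0 Pmid Ptop Pkk : pred (seq nat)) n :
  (forall s, P (0 :: s) = P0 s) -> (forall x s, 0 < x < k.-1 -> P (x :: s) = Pmid s) ->
  (forall s, P (k.-1 :: s) = Ptop s) -> (forall s, P (k :: s) = Pkk s) ->
  count P (enum_words n.+1 k) =
  count P0 (enum_words n k) + (k - 2) * count Pmid (enum_words n k) +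
  count Ptop (enum_words n k) + count Pkk (enum_words n k).
Proof.
move=> P_0 P_mid P_top P_kk; rewrite count_enum_wordsS sum_split_ends //.
rewrite (eq_count P_0) (eq_count P_top) (eq_count P_kk).
rewrite (eq_big_nat _ _ (F2 := fun=> count Pmid (enum_words n k))) ?sum_nat_const_nat.
  by congr (_ + _ * _ + _ + _); lia.
by move=> x x_mid; apply: eq_count => s; apply: P_mid.
Qed.

Lemma deficient_cons_mid d x s : 0 < x < k.-1 -> deficient k d (x :: s) = deficient k d s.
Proof.
by move=> x_mid; rewrite /deficient is_pell_cons ?deficiency_cons_mid //; lia.
Qed.

Lemma deficient_cons0 d s : deficient k d (0 :: s) = (0 < d) && deficient k d.-1 s.
Proof.
rewrite /deficient is_pell_cons ?deficiency_cons0 //; last by lia.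
by case: d => [|d] //=; rewrite andbF.
Qed.

Lemma deficient_cons_top d s :
  deficient k d (k.-1 :: s) = deficient k d s && (ohead s == Some k.-1) ||
                              (0 < d) && deficient k d.-1 s && (ohead s != Some k.-1).
Proof.
rewrite /deficient is_pell_cons ?deficiency_cons_top //; last by lia.
by case: (eqVneq (ohead s) (Some k.-1)); case: d => [|d] //=; rewrite ?andbF ?andbT ?orbF.
Qed.

Lemma deficient_cons_kk d s : d < 3 -> deficient k d (k :: s) = false.
Proof.
move=> d_lt3; rewrite /deficient (negbTE (_ : deficiency k _ != d)) ?andbF //.
by apply: contraTneq (deficiency_kk k s) => ->; rewrite -leqNgt.
Qed.

Lemma deficient0_ohead s : deficient k 0 s -> ohead s != Some k.-1.
Proof.
by case/andP=> _ /eqP def0; apply: contra_eqN def0 => /eqP/(deficiency_top_gt0 k_gt1); lia.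
Qed.

Lemma count_deficient1_cons_top n :
  count (fun s => deficient k 1 (k.-1 :: s)) (enum_words n k) =
  count (deficient k 0) (enum_words n k) + count top_deficient1 (enum_words n k).
Proof.
apply: count_addn => s; rewrite deficient_cons_top /top_deficient1 /=.
case def0: (deficient k 0 s); first by rewrite (negbTE (deficient0_ohead def0)) !andbF.
by case: (ohead s == _); rewrite ?andbT ?andbF ?orbF.
Qed.

Lemma count_deficient0 n : count (deficient k 0) (enum_words n k) = (k - 2) ^ n.
Proof.
elim: n => [|n IH] //.
rewrite (@count_enum_words_first_letter _ pred0 (deficient k 0) pred0 pred0) ?count_pred0.
- by rewrite IH expnS !addn0.
- by move=> s; rewrite deficient_cons0.
- by move=> x s; apply: deficient_cons_mid.
- move=> s; rewrite deficient_cons_top /= orbF.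
  by case def0: (deficient k 0 s); rewrite ?(negbTE (deficient0_ohead def0)).
- by move=> s; rewrite deficient_cons_kk.
Qed.

Lemma count_top_deficient1 n :
  count top_deficient1 (enum_words n k) = \sum_(0 <= i < n) (k - 2) ^ i.
Proof.
elim: n => [|n IH]; first by rewrite big_geq.
rewrite (@count_enum_words_first_letter _ pred0 pred0 (fun s => deficient k 1 (k.-1 :: s)) pred0).
- rewrite !count_pred0 count_deficient1_cons_top count_deficient0 IH big_nat_recr //.
  by set S := \sum_(0 <= i < n) _; rewrite /=; lia.
- by move=> s; rewrite top_deficient1_cons (_ : 0 == k.-1 = false) //; apply/negbTE; lia.
- by move=> x s x_mid; rewrite top_deficient1_cons (_ : x == k.-1 = false) //; apply/negbTE; lia.
- by move=> s; rewrite top_deficient1_cons eqxx.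
- by move=> s; rewrite top_deficient1_cons (_ : k == k.-1 = false) //; apply/negbTE; lia.
Qed.

Lemma count_deficient1 n :
  count (deficient k 1) (enum_words n k) = n * (k - 2) ^ (n - 1) + weighted_powsum (k - 2) n.
Proof.
elim: n => [|n IH]; first by rewrite /weighted_powsum big_geq.
rewrite (@count_enum_words_first_letter _ (deficient k 0) (deficient k 1)
                                     (fun s => deficient k 1 (k.-1 :: s)) pred0) //.
- rewrite count_pred0 count_deficient1_cons_top count_deficient0 count_top_deficient1 IH.
  have := weighted_powsum_geom (k - 2) n.
  have pow_pred c : c * (n * c ^ (n - 1)) = n * c ^ n.
    by case: (n) => [|m]; rewrite ?muln0 // subSS subn0 expnS mulnCA.
  by rewrite weighted_powsumS subSS subn0 mulnDr pow_pred; lia.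
- by move=> s; rewrite deficient_cons0.
- by move=> x s; apply: deficient_cons_mid.
- by move=> s; rewrite deficient_cons_kk.
Qed.

End DeficiencyCounts.

Unset Implicit Arguments.

Theorem corollary5p6 (n k : nat) :
  1 <= n -> 3 <= k ->
  pell_maxdeg n k = 2 * n /\
  #|[set v in pell_vertices n k | pell_deg v == (pell_maxdeg n k).-1]| =
    n * (k - 2) ^ (n - 1) + \sum_(1 <= l < n.+1) (n - l + 1) * (k - 2) ^ (n - l).
Proof.
move=> n_gt0 k_ge3; have maxdeg := pell_maxdegE n k_ge3.
split=> //; rewrite maxdeg card_pell_deg_pred //; last by apply: leq_trans k_ge3.
exact: count_deficient1.
Qed.
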